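(* Let $\mathbf{S}$ be a distributive meet semilattice, $n\ge1$ an integer, and $U$ an upset of $\mathbf{S}$. Then for every $a\in\mathbf{S}$, $a$ belongs to the $n$-filter generated by $U$ if and only if there is a non-empty finite set $X\subseteq U$ such that $\bigwedge Y\in U$ for each $Y\subseteq_n X$ and $\bigwedge X\le a$. Moreover, the condition $\bigwedge X\le a$ may equivalently be replaced by $\bigwedge X=a$.
   Context: A meet semilattice is distributive if whenever $x\wedge y\le z$ there are $x'\ge x$ and $y'\ge y$ with $x'\wedge y'=z$. For a set $X$, $Y\subseteq_n X$ means $Y$ is a non-empty subset of $X$ with $|Y|\le n$. An $n$-filter on a meet semilattice $\mathbf{S}$ is an upset $F\subseteq\mathbf{S}$ such that for every non-empty finite $X\subseteq F$: if $\bigwedge Y\in F$ for every $Y\subseteq_n X$, then $\bigwedge X\in F$. The $n$-filters are closed under arbitrary intersections, and the $n$-filter generated by a set is the smallest $n$-filter containing it. *)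

From HB Require Import structures.
From mathcomp Require Import all_boot all_order.
From mathcomp Require Import finmap.
Set Implicit Arguments. Unset Strict Implicit. Unset Printing Implicit Defensive.
Import Order.TTheory.
Local Open Scope order_scope.
Local Open Scope fset_scope.

Section NFilters.
Context {disp : Order.disp_t} {S : meetSemilatticeType disp}.

Definition fmeet (X : {fset S}) : option S :=
  match enum_fset X with
  | x :: s => Some (foldr Order.meet x s)
  | [::] => None
  end.

Definition meet_in (P : S -> Prop) (X : {fset S}) : Prop :=
  exists2 m, fmeet X = Some m & P m.

Definition distributive_msl : Prop :=
  forall x y z : S, Order.meet x y <= z ->
    exists x' y' : S, [/\ x <= x', y <= y' & Order.meet x' y' = z].

Definition upset (U : S -> Prop) : Prop :=
  forall x y : S, U x -> x <= y -> U y.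

Definition subset_n (n : nat) (Y X : {fset S}) : Prop :=
  [/\ Y != fset0, Y `<=` X & (#|` Y| <= n)%N].

Definition n_filter (n : nat) (F : S -> Prop) : Prop :=
  upset F /\
  forall X : {fset S}, X != fset0 -> (forall x, x \in X -> F x) ->
    (forall Y, subset_n n Y X -> meet_in F Y) -> meet_in F X.

Definition gen_n_filter (n : nat) (U : S -> Prop) (a : S) : Prop :=
  forall F, n_filter n F -> (forall x, U x -> F x) -> F a.

End NFilters.

From HB Require Import structures.
From mathcomp Require Import all_boot all_order.
From mathcomp Require Import finmap.
Set Implicit Arguments. Unset Strict Implicit. Unset Printing Implicit Defensive.
Import Order.TTheory.
Local Open Scope order_scope.
Local Open Scope fset_scope.

(* Let G be the set of those a for which some finite non-empty X ⊆ U, all of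
   whose subsets of size at most n have their meet in U, satisfies ⋀X ≤ a.
   Clearly U ⊆ G and G is contained in every n-filter containing U, so it
   suffices to show that G is an n-filter; only the closure rule needs work.
   Distributivity rewrites z ≥ ⋀W as z = ⋀Q with every q ∈ Q above an element
   of W.  Iterating this over the finitely many witnesses W_I (one for each
   small I ⊆ Z) splits each z ∈ Z as z = ⋀P_z where every p ∈ P_z dominates
   an element of each W_I with z ∈ I.  The union X of the P_z has ⋀X = ⋀Z,
   and a small Y ⊆ X dominates a small subset of a single W_I, so ⋀Y ∈ U.
   One splitting step likewise turns ⋀X ≤ a into ⋀X' = a. *)

Lemma seq_choice (T : eqType) (V : Type) (P : T -> V -> Prop) (v0 : V) (s : seq T) :
  {in s, forall x, exists y, P x y} -> exists f : T -> V, {in s, forall x, P x (f x)}.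
Proof.
elim: s => [|a s IH] Hs; first by exists (fun=> v0).
have [y Py] := Hs a (mem_head _ _).
have [f Hf] : exists f : T -> V, {in s, forall x, P x (f x)}.
  by apply: IH => x xs; apply: Hs; rewrite inE xs orbT.
exists (fun x => if x == a then y else f x) => x; rewrite inE.
by case: eqP => [->|_] //= /Hf.
Qed.

Lemma fset_witnesses (K : choiceType) (R : K -> K -> Prop) (A Y : {fset K}) :
  {in Y, forall y, exists2 a, a \in A & R a y} ->
  exists B : {fset K}, [/\ B `<=` A, (#|` B| <= #|` Y|)%N, Y != fset0 -> B != fset0
                       & {in Y, forall y, exists2 b, b \in B & R b y}].
Proof.
have [-> _|/fset0Pn [y0 Yy0] YA] := eqVneq Y fset0.
  by exists fset0; rewrite fsub0set.
have [f Yf] := @seq_choice _ _ (fun y a => a \in A /\ R a y) y0 (enum_fset Y)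
  (fun y Yy => let: ex_intro2 a Aa Ray := YA y Yy in ex_intro _ a (conj Aa Ray)).
exists (f @` Y); split.
- by apply/fsubsetP => _ /imfsetP [y /Yf [Afy _] ->].
- exact: leq_imfset_card.
- by move=> _; apply/fset0Pn; exists (f y0); apply: in_imfset.
- by move=> y Yy; exists (f y); [apply: in_imfset | case: (Yf y Yy)].
Qed.

Section Glb.
Context {disp : Order.disp_t} {S : meetSemilatticeType disp}.
Implicit Types (s Q : seq S) (X Y W : {fset S}) (c m x z : S).

Definition is_glb s m : Prop := forall c, c <= m <-> {in s, forall x, c <= x}.

Lemma is_glb_le s m : is_glb s m -> {in s, forall x, m <= x}.
Proof. by move=> sm; apply/sm. Qed.

Lemma is_glb_uniq s m m' : is_glb s m -> is_glb s m' -> m = m'.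
Proof.
by move=> sm sm'; apply/le_anti/andP; split; [apply/sm'/sm | apply/sm/sm'].
Qed.

Lemma is_glb_eq_mem s s' m : s =i s' -> is_glb s m -> is_glb s' m.
Proof.
by move=> ss' sm c; rewrite sm; split=> Hc x; [rewrite -ss' | rewrite ss']; apply: Hc.
Qed.

Lemma is_glb1 x : is_glb [:: x] x.
Proof. by move=> c; split=> [cx y /[!inE] /eqP ->|]; last apply; rewrite ?inE. Qed.

Lemma is_glb_cons x s m : is_glb s m -> is_glb (x :: s) (x `&` m)%O.
Proof.
move=> sm c; rewrite lexI; split=> [/andP [cx /sm cs] y /[!inE] /orP [/eqP -> //|]|cxs].
  exact: cs.
by rewrite cxs ?mem_head //=; apply/sm => y ys; apply: cxs; rewrite inE ys orbT.
Qed.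

Lemma is_glb_foldr x s : is_glb (x :: s) (foldr Order.meet x s).
Proof.
elim: s => [|y s IH] /=; first exact: is_glb1.
by apply: is_glb_eq_mem (is_glb_cons y IH) => z; rewrite !inE orbCA.
Qed.

Lemma is_glb_flatten (F : S -> seq S) Q z :
  {in Q, forall q, is_glb (F q) q} -> is_glb Q z -> is_glb (flatten (map F Q)) z.
Proof.
move=> FQ Qz c; rewrite Qz; split=> [cQ p /flatten_mapP [q Qq Fqp]|cF q Qq].
  exact: le_trans (cQ q Qq) (is_glb_le (FQ q Qq) Fqp).
by apply/(FQ q Qq) => p Fqp; apply: cF; apply/flatten_mapP; exists q.
Qed.

Lemma flatten_map_neq_nil (F : S -> seq S) Q :
  Q != [::] -> {in Q, forall q, F q != [::]} -> flatten (map F Q) != [::].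
Proof. by case: Q => // q Q _ /(_ q (mem_head _ _)) /=; case: (F q). Qed.

Lemma fmeet_glb X m : fmeet X = Some m -> is_glb (enum_fset X) m.
Proof. by rewrite /fmeet; case: (enum_fset X) => // x s [<-]; apply: is_glb_foldr. Qed.

Lemma fmeet_exists X : X != fset0 -> exists m, fmeet X = Some m.
Proof.
move=> /fset0Pn [x]; rewrite /fmeet -[x \in X]/(x \in enum_fset X).
by case: (enum_fset X) => // y s _; eexists.
Qed.

Lemma fmeetE X m : X != fset0 -> is_glb (enum_fset X) m -> fmeet X = Some m.
Proof.
by move=> /fmeet_exists [m' Xm'] Xm; rewrite Xm' (is_glb_uniq (fmeet_glb Xm') Xm).
Qed.

Lemma fmeet_seq_fset Q c : Q != [::] -> is_glb Q c ->
  seq_fset tt Q != fset0 /\ fmeet (seq_fset tt Q) = Some c.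
Proof.
case: Q => // q Q _ Qc; have Q0 : seq_fset tt (q :: Q) != fset0.
  by apply/fset0Pn; exists q; rewrite seq_fsetE mem_head.
by split; last by apply: fmeetE Q0 (is_glb_eq_mem _ Qc) => y; rewrite seq_fsetE.
Qed.

Lemma fmeet_sub1 x Y : Y != fset0 -> Y `<=` [fset x] -> fmeet Y = Some x.
Proof.
move=> Y0 /fsubsetP Yx; apply: fmeetE => // c; split=> [cx y /Yx /[!inE] /eqP -> //|cY].
by have [y Yy] := fset0Pn _ Y0; have /Yx /[!inE] /eqP <- := Yy; apply: cY.
Qed.

Lemma fmeet1 x : fmeet [fset x] = Some x.
Proof. by apply: fmeet_sub1; rewrite // -cardfs_gt0 cardfs1. Qed.

Lemma sub_meet_in (P P' : S -> Prop) X :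
  (forall x, P x -> P' x) -> meet_in P X -> meet_in P' X.
Proof. by move=> PP' [m Xm /PP']; exists m. Qed.

End Glb.

Section Splitting.
Context {disp : Order.disp_t} {S : meetSemilatticeType disp}.
Hypothesis S_distr : distributive_msl (S := S).
Implicit Types (s Q : seq S) (X W : {fset S}) (c m x z : S).

Lemma glb_split x s m c : is_glb (x :: s) m -> m <= c ->
  exists Q, [/\ Q != [::], is_glb Q c & {in Q, forall q, exists2 y, y \in x :: s & y <= q}].
Proof.
elim: s x m c => [|y s IH] x m c xsm mc.
  exists [:: c]; split=> //; first exact: is_glb1.
  move=> q /[!inE] /eqP ->; exists x; rewrite ?mem_head //.
  by rewrite (is_glb_uniq (is_glb1 x) xsm).
have ysm := is_glb_foldr y s.
rewrite (is_glb_uniq xsm (is_glb_cons x ysm)) in mc.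
have [x' [y' [xx' yy' <-]]] := S_distr mc.
have [Q [Q0 Qy' Qabove]] := IH _ _ _ ysm yy'.
exists (x' :: Q); split=> //; first exact: is_glb_cons.
move=> q /[!inE] /orP [/eqP ->|Qq]; first by exists x; rewrite ?mem_head.
by have [z zys zq] := Qabove q Qq; exists z; rewrite // inE zys orbT.
Qed.

Lemma fmeet_split X m c : fmeet X = Some m -> m <= c ->
  exists Q, [/\ Q != [::], is_glb Q c & {in Q, forall q, exists2 y, y \in X & y <= q}].
Proof.
move=> Xm; have := fmeet_glb Xm.
case E: (enum_fset X) => [|x s]; first by move: Xm; rewrite /fmeet E.
move=> /glb_split /[apply] [[Q [Q0 Qc Qabove]]]; exists Q; split=> // q /Qabove [y].
by rewrite -E => Xy yq; exists y.
Qed.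

Definition splitting (L : seq {fset S}) z (P : seq S) : Prop :=
  [/\ P != [::], is_glb P z &
      {in P, forall p, {in L, forall W,
        meet_in (fun m => m <= z) W -> exists2 w, w \in W & w <= p}}].

Lemma splitting_exists (L : seq {fset S}) z : exists P, splitting L z P.
Proof.
elim: L z => [|W L IH] z; first by exists [:: z]; split=> //; apply: is_glb1.
have [[m Wm mz]|Wnz] : meet_in (fun m => m <= z) W \/ ~ meet_in (fun m => m <= z) W.
  case Wm: (fmeet W) => [m|]; last by right=> -[m']; rewrite Wm.
  have [mz|nmz] := boolP (m <= z); first by left; exists m.
  by right=> -[m']; rewrite Wm => -[<-]; apply/negP.
- have [Q [Q0 Qz QW]] := fmeet_split Wm mz.
  have [F FQ] := @seq_choice _ _ (splitting L) [::] Q (fun q _ => IH q).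
  exists (flatten (map F Q)); split.
  + by apply: flatten_map_neq_nil => // q /FQ [].
  + by apply: is_glb_flatten Qz => q /FQ [].
  move=> p /flatten_mapP [q Qq Fqp] W'; have [_ Fqq FqL] := FQ q Qq.
  rewrite inE => /orP [/eqP -> _|LW' [m' W'm' m'z]].
    have [w Ww wq] := QW q Qq.
    by exists w; last exact: le_trans wq (is_glb_le Fqq Fqp).
  by apply: FqL Fqp _ LW' _; exists m' => //; apply: le_trans m'z (is_glb_le Qz Qq).
- have [P [P0 Pz PL]] := IH z; exists P; split=> // p Pp W'.
  by rewrite inE => /orP [/eqP -> /Wnz //|]; apply: PL.
Qed.

End Splitting.

Section NGenerated.
Context {disp : Order.disp_t} {S : meetSemilatticeType disp}.
Variables (n : nat) (U : S -> Prop).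
Implicit Types (X Y Z W : {fset S}) (a m x z : S).

Definition n_consistent X : Prop :=
  [/\ X != fset0, {in X, forall x, U x} & forall Y, subset_n n Y X -> meet_in U Y].

Definition n_generated a : Prop :=
  exists2 X, n_consistent X & meet_in (fun m => m <= a) X.

Lemma n_generated_upset : upset n_generated.
Proof.
by move=> x y [X XU [m Xm mx]] xy; exists X => //; exists m; last exact: le_trans xy.
Qed.

Lemma n_generated_of_U x : U x -> n_generated x.
Proof.
move=> Ux; exists [fset x]; last by exists x; rewrite ?fmeet1.
split=> [|y /[!inE] /eqP -> //|Y [Y0 Yx _]]; first by rewrite -cardfs_gt0 cardfs1.
by exists x => //; apply: fmeet_sub1.
Qed.

Lemma n_generated_sub_filter F :
  n_filter n F -> (forall x, U x -> F x) -> forall a, n_generated a -> F a.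
Proof.
move=> [F_upset F_closed] UF a [X [X0 XU XY] [m Xm ma]].
have [m' Xm' Fm'] := F_closed X X0 (fun x Xx => UF x (XU x Xx))
  (fun Y YX => sub_meet_in UF (XY Y YX)).
by move: Xm' Fm'; rewrite Xm => -[<-] Fm; apply: F_upset Fm ma.
Qed.

Hypothesis U_upset : upset U.

Lemma meet_in_dominated A Y : Y != fset0 -> (#|` Y| <= n)%N ->
  {in Y, forall y, exists2 w, w \in A & w <= y} ->
  (forall B, subset_n n B A -> meet_in U B) -> meet_in U Y.
Proof.
move=> Y0 Yn YA AU; have [B [BA BY /(_ Y0) B0 YB]] := fset_witnesses YA.
have [mB Bm UmB] := AU B (And3 B0 BA (leq_trans BY Yn)).
have [mY Ym] := fmeet_exists Y0; exists mY => //; apply: U_upset UmB _.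
apply/(fmeet_glb Ym) => y Yy; have [b Bb b_y] := YB y Yy.
exact: le_trans (is_glb_le (fmeet_glb Bm) Bb) b_y.
Qed.

Hypothesis n_gt0 : (0 < n)%N.

Lemma n_consistentP X :
  X != fset0 -> (forall Y, subset_n n Y X -> meet_in U Y) -> n_consistent X.
Proof.
move=> X0 XU; split=> // x Xx.
have [|m] := XU [fset x]; last by rewrite fmeet1 => -[<-].
by rewrite /subset_n fsub1set Xx cardfs1 -cardfs_gt0 cardfs1.
Qed.

Hypothesis S_distr : distributive_msl (S := S).

Lemma n_generated_closed Z :
  Z != fset0 -> (forall I, subset_n n I Z -> meet_in n_generated I) -> meet_in n_generated Z.
Proof.
move=> Z0 ZI.
pose witness I W := subset_n n I Z ->
  n_consistent W /\ {in I, forall z, meet_in (fun m => m <= z) W}.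
have [W IW] : exists W : {fset S} -> {fset S},
    {in enum_fset (fpowerset Z), forall I, witness I (W I)}.
  apply: (@seq_choice _ _ witness fset0) => I _; rewrite /witness.
  have [IZ|nIZ] := @and3P (I != fset0) (I `<=` Z) (#|` I| <= n)%N;
    last by exists fset0 => /nIZ.
  have [mI Im [X XU [mX Xm mXI]]] := ZI I IZ.
  exists X => _; split=> // z Iz; exists mX => //.
  exact: le_trans mXI (is_glb_le (fmeet_glb Im) Iz).
pose L := map W (enum_fset (fpowerset Z)).
have [F FZ] := @seq_choice _ _ (splitting L) [::] (enum_fset Z)
  (fun z _ => splitting_exists S_distr L z).
have [mZ Zm] := fmeet_exists Z0.
pose P := flatten (map F (enum_fset Z)).
have [X0 Xm] : seq_fset tt P != fset0 /\ fmeet (seq_fset tt P) = Some mZ.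
  apply: fmeet_seq_fset; last by apply: is_glb_flatten (fmeet_glb Zm) => z /FZ [].
  by apply: flatten_map_neq_nil => [|z /FZ []]; rewrite // -size_eq0 cardfs_eq0.
exists mZ => //; exists (seq_fset tt P); last by exists mZ.
apply: n_consistentP => // Y [Y0 /fsubsetP YX Yn].
have YZ : {in Y, forall y, exists2 z, z \in Z & y \in F z}.
  by move=> y /YX; rewrite seq_fsetE => /flatten_mapP.
have [I [IZ IY /(_ Y0) I0 YI]] := fset_witnesses YZ.
have PZI : I \in enum_fset (fpowerset Z) by rewrite fpowersetE.
have [[_ _ WU] WI] := IW I PZI (And3 I0 IZ (leq_trans IY Yn)).
apply: meet_in_dominated Y0 Yn _ WU => y Yy; have [z Iz Fzy] := YI y Yy.
have [_ _ FzL] := FZ z (fsubsetP IZ z Iz).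
exact: FzL Fzy _ (map_f W PZI) (WI z Iz).
Qed.

Lemma n_filter_n_generated : n_filter n n_generated.
Proof. by split=> [|Z Z0 _]; [apply: n_generated_upset | apply: n_generated_closed]. Qed.

Lemma gen_n_filterE a : gen_n_filter n U a <-> n_generated a.
Proof.
split=> [|Ga F Fn UF]; last exact: n_generated_sub_filter Fn UF a Ga.
by apply; [apply: n_filter_n_generated | apply: n_generated_of_U].
Qed.

Lemma n_generated_exact a : n_generated a -> exists2 X, n_consistent X & fmeet X = Some a.
Proof.
move=> [X [_ _ XY] [m Xm ma]].
have [Q [Q0 Qa QX]] := fmeet_split S_distr Xm ma.
have [X'0 X'a] := fmeet_seq_fset Q0 Qa.
exists (seq_fset tt Q) => //; apply: n_consistentP => // Y [Y0 /fsubsetP YX' Yn].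
by apply: meet_in_dominated Y0 Yn _ XY => y /YX'; rewrite seq_fsetE => /QX.
Qed.

End NGenerated.

Unset Implicit Arguments.

Theorem mainTheorem2 (disp : Order.disp_t) (S : meetSemilatticeType disp)
  (n : nat) (U : S -> Prop) :
  distributive_msl (S := S) -> (1 <= n)%N -> upset U ->
  forall a : S,
    (gen_n_filter n U a <->
      exists X : {fset S}, [/\ X != fset0, (forall x, x \in X -> U x),
        (forall Y, subset_n n Y X -> meet_in U Y) &
        exists2 m, fmeet X = Some m & m <= a]) /\
    (gen_n_filter n U a <->
      exists X : {fset S}, [/\ X != fset0, (forall x, x \in X -> U x),
        (forall Y, subset_n n Y X -> meet_in U Y) &
        fmeet X = Some a]).
Proof.
move=> S_distr n_gt0 U_upset a; rewrite gen_n_filterE //.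
split; split.
- by case=> X [X0 XU XY] Xa; exists X.
- by case=> X [X0 XU XY Xa]; exists X.
- by case/n_generated_exact => // X [X0 XU XY] Xa; exists X.
- by case=> X [X0 XU XY Xa]; exists X => //; exists a.
Qed.
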